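(* Let $p\in B(\mathcal H)$ be selfadjoint and suppose that for every $\omega\in\{\omega_-,\omega_+,\omega_1,\dots,\omega_{N-1}\}$, $$L_{-,\omega}\,p=p\,L_{-,\omega}\,p\qquad\text{and}\qquad L_{-,\omega}^*\,p=p\,L_{-,\omega}^*\,p.$$ Then $p$ is harmonic for $(\mathcal T_t^* )_{t\ge0}$.
   Context: Fix integers $N\ge 2$ and $n_1\ge n_2\ge\dots\ge n_N\ge 1$. Let $\mathcal H$ be a finite-dimensional complex Hilbert space with orthonormal basis $\{|-\rangle,|+\rangle\}\cup\{|a_k\rangle:1\le k\le N,\ 0\le a\le n_k-1\}$. For vectors $x,y$, $|x\rangle\langle y|$ denotes the operator $u\mapsto\langle y,u\rangle x$. Put $E_k=\mathrm{span}\{|a_k\rangle:0\le a\le n_k-1\}$, $P_k$ the orthogonal projection onto $E_k$, $P_\pm=|\pm\rangle\langle\pm|$, $\zeta_k=e^{2\pi i/n_k}$, and $\varphi_{a_k}=n_k^{-1/2}\sum_{b=0}^{n_k-1}\zeta_k^{-ba}|b_k\rangle$. For $1\le k\le N-1$ let $Z_k=n_k^{-1/2}\sum_{b=0}^{n_{k+1}-1}\sum_{a=0}^{n_k-1}\zeta_k^{ba}|b_{k+1}\rangle\langle a_k|$, $|Z|_k=Z_k^*Z_k$. Let $\omega$ range over $\{\omega_+,\omega_-,\omega_1,\dots,\omega_{N-1}\}$ and let $\Gamma_{\pm,\omega}>0$, $\gamma_{\pm,\omega}\in\mathbb R$ be constants. Kraus operators: $L_{-,\omega_+}=\sqrt{n_1\Gamma_{-,\omega_+}}|\varphi_{0_1}\rangle\langle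 +|$, $L_{+,\omega_+}=\sqrt{n_1\Gamma_{+,\omega_+}}|+\rangle\langle\varphi_{0_1}|$, $L_{-,\omega_k}=\sqrt{\Gamma_{-,\omega_k}}Z_k$, $L_{+,\omega_k}=\sqrt{\Gamma_{+,\omega_k}}Z_k^*$, $L_{-,\omega_-}=\sqrt{\Gamma_{-,\omega_-}}|-\rangle\langle\varphi_{0_N}|$, $L_{+,\omega_-}=0$. $H_{\mathrm{eff}}=n_1\gamma_{-,\omega_+}P_+-n_1\gamma_{+,\omega_+}|\varphi_{0_1}\rangle\langle\varphi_{0_1}|+\gamma_{-,\omega_-}|\varphi_{0_N}\rangle\langle\varphi_{0_N}|-\gamma_{+,\omega_-}P_-+\sum_{k=1}^{N-1}(\gamma_{-,\omega_k}|Z|_k-\gamma_{+,\omega_k}P_{k+1})$. The dual generator is $\mathcal L^*(x)=i[H_{\mathrm{eff}},x]+\sum_{\omega}\sum_{\epsilon=\pm}\big(L_{\epsilon,\omega}^*xL_{\epsilon,\omega}-\tfrac12\{L_{\epsilon,\omega}^*L_{\epsilon,\omega},x\}\big)$ and $\mathcal T_t^*=e^{t\mathcal L^*}$. A selfadjoint $p$ is harmonic if $\mathcal T_t^*(p)=p$ for all $t\ge0$. *)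

From mathcomp Require Import all_boot all_order all_algebra.
From mathcomp Require Import all_classical all_reals all_analysis.
From mathcomp Require Import complex.
Import GRing.Theory Num.Theory numFieldNormedType.Exports.

Set Implicit Arguments.
Unset Strict Implicit.
Unset Printing Implicit Defensive.

Local Open Scope ring_scope.
Local Open Scope classical_set_scope.

(* Conventions (0-indexed): the paper's block index k = 1..N is our k = 0..N-1,
   so n_k (paper) = n (k-1) here.  The paper's omega_k, k = 1..N-1, is our
   [inr k] with k : 'I_N.-1 (so paper omega_{k+1} <-> our inr k).            *)

Section QMS.
Variable R : realType.
Local Notation C := R[i].
Variable N : nat.
Variable n : nat -> nat.

(* Orthonormal basis index: inl false = |->, inl true = |+>,
   inr (existT k a) = |a_k> with k : 'I_N, a : 'I_(n k).                     *)
Definition Idx : finType := (bool + {k : 'I_N & 'I_(n k)})%type.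

(* Channel labels: inl true = omega_+, inl false = omega_-, inr k = omega_k. *)
Definition Omega : finType := (bool + 'I_N.-1)%type.

Definition vec := Idx -> C.
Definition op := Idx -> Idx -> C.

Definition rC (r : R) : C := (r +i* 0)%C.

Definition op0 : op := fun _ _ => 0.
Definition opadd (A B : op) : op := fun i j => A i j + B i j.
Definition opsub (A B : op) : op := fun i j => A i j - B i j.
Definition opscale (c : C) (A : op) : op := fun i j => c * A i j.
Definition opmul (A B : op) : op := fun i j => \sum_(l : Idx) A i l * B l j.
Definition adj (A : op) : op := fun i j => ((A j i)^*)%C.
Definition ketbra (x y : vec) : op := fun i j => x i * ((y j)^*)%C.
Definition basis (i : Idx) : vec := fun j => if j == i then 1 else 0.

Definition selfadjoint (A : op) := adj A = A.

Definition ket_minus : vec := basis (inl false).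
Definition ket_plus : vec := basis (inl true).
Definition P_minus : op := ketbra ket_minus ket_minus.
Definition P_plus : op := ketbra ket_plus ket_plus.

(* orthogonal projection onto E_k (our 0-indexed k) *)
Definition Pblock (k : nat) : op := fun i j =>
  if i == j then (match i with inr (existT k' _) => if val k' == k then 1 else 0
                            | inl _ => 0 end)
  else 0.

Definition zeta (m : nat) : C :=
  (cos (2 * pi / m%:R) +i* sin (2 * pi / m%:R))%C.
Definition isqrt (m : nat) : C := rC (Num.sqrt (m%:R))^-1.

Definition phi (k a : nat) : vec := fun i =>
  match i with
  | inr (existT k' b) =>
      if val k' == k then isqrt (n k) * (zeta (n k) ^+ (val b * a))^-1 else 0
  | inl _ => 0
  end.

Definition Z (k : nat) : op := fun i j =>
  match i, j with
  | inr (existT k1 b), inr (existT k0 a) =>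
      if (val k1 == k.+1) && (val k0 == k)
      then isqrt (n k) * zeta (n k) ^+ (val b * val a) else 0
  | _, _ => 0
  end.

Definition absZ (k : nat) : op := opmul (adj (Z k)) (Z k).

Variable Gam : bool -> Omega -> R.  (* Gam true w = Gamma_{+,w}, Gam false w = Gamma_{-,w} *)
Variable gam : bool -> Omega -> R.  (* gam true w = gamma_{+,w}, gam false w = gamma_{-,w} *)

Definition w_plus : Omega := inl true.
Definition w_minus : Omega := inl false.

Definition phi01 : vec := phi 0 0.
Definition phi0N : vec := phi N.-1 0.

(* Kraus operators L_{eps,w}; eps = true is '+', eps = false is '-' *)
Definition Kraus (eps : bool) (w : Omega) : op :=
  match w with
  | inl true =>
      if eps then opscale (rC (Num.sqrt ((n 0)%:R * Gam true w))) (ketbra ket_plus phi01)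
      else opscale (rC (Num.sqrt ((n 0)%:R * Gam false w))) (ketbra phi01 ket_plus)
  | inl false =>
      if eps then op0
      else opscale (rC (Num.sqrt (Gam false w))) (ketbra ket_minus phi0N)
  | inr k =>
      if eps then opscale (rC (Num.sqrt (Gam true w))) (adj (Z (val k)))
      else opscale (rC (Num.sqrt (Gam false w))) (Z (val k))
  end.

Definition opsum (F : 'I_N.-1 -> op) : op := fun i j => \sum_(k : 'I_N.-1) F k i j.

Definition Heff : op :=
  opadd (opscale (rC ((n 0)%:R * gam false w_plus)) P_plus)
  (opadd (opscale (rC (- ((n 0)%:R * gam true w_plus))) (ketbra phi01 phi01))
  (opadd (opscale (rC (gam false w_minus)) (ketbra phi0N phi0N))
  (opadd (opscale (rC (- gam true w_minus)) P_minus)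
   (opsum (fun k => opsub (opscale (rC (gam false (inr k))) (absZ (val k)))
                          (opscale (rC (gam true (inr k))) (Pblock (val k).+1))))))).

Definition Lstar (x : op) : op := fun i j =>
  ('i%C * (opmul Heff x i j - opmul x Heff i j)) +
  \sum_(w : Omega) \sum_(eps : bool)
     (let L := Kraus eps w in
      let LL := opmul (adj L) L in
      opmul (opmul (adj L) x) L i j
      - 2^-1 * (opmul LL x i j + opmul x LL i j)).

Definition expL_partial (t : R) (x : op) (M : nat) : op := fun i j =>
  \sum_(k < M) rC (t ^+ k / (factorial k)%:R) * iter k Lstar x i j.

(* T^*_t(x) = e^{t L^*}(x) = y, the exponential series converging entrywise *)
Definition Tstar_is (t : R) (x y : op) : Prop :=
  forall i j : Idx,
    (fun M => complex.Re (expL_partial t x M i j)) @ \oo --> complex.Re (y i j) /\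
    (fun M => complex.Im (expL_partial t x M i j)) @ \oo --> complex.Im (y i j).

Definition is_harmonic (p : op) : Prop :=
  selfadjoint p /\ forall t : R, 0 <= t -> Tstar_is t p p.

End QMS.

(* Taking adjoints in the second identity gives p L = p L p, so with the first
   one p commutes with every L_{-,w}; being selfadjoint, p then also commutes
   with their adjoints, which are (up to scalars) the operators L_{+,w}.  Every
   term of H_eff is a multiple of a product of these operators:
   P_+ = (|+><phi_{0_1}|)(|phi_{0_1}><+|), |phi_{0_1}><phi_{0_1}| =
   (|phi_{0_1}><+|)(|+><phi_{0_1}|), similarly for P_- and |phi_{0_N}><phi_{0_N}|,
   |Z|_k = Z_k^* Z_k, and P_{k+1} = Z_k Z_k^* by the orthogonality of the
   characters b |-> zeta_k^{ab} (here n_{k+1} <= n_k is used).  So p commutes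
   with H_eff and with all Kraus operators, L^*(p) = 0, and the exponential
   series defining T_t^*(p) is constantly p. *)

From Pilot Require Import Defs.
From mathcomp Require Import all_boot all_order all_algebra.
From mathcomp Require Import all_classical all_reals all_analysis.
From mathcomp Require Import complex.
From mathcomp Require Import ring lra.
Import Order.TTheory GRing.Theory Num.Theory numFieldNormedType.Exports.

Set Implicit Arguments.
Unset Strict Implicit.
Unset Printing Implicit Defensive.

Local Open Scope ring_scope.

Section OperatorAlgebra.
Variables (R : realType) (N : nat) (n : nat -> nat).
Local Notation C := R[i].
Local Notation op := (op R N n).
Local Notation vec := (vec R N n).
Local Notation op0 := (@op0 R N n).

Lemma opP (A B : op) : (forall i j, A i j = B i j) -> A = B.
Proof. by move=> eqAB; apply/funext => i; apply/funext => j. Qed.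

Lemma opmulA (A B D : op) : opmul (opmul A B) D = opmul A (opmul B D).
Proof.
apply: opP => i j; rewrite /opmul.
under eq_bigr do rewrite mulr_suml.
rewrite exchange_big; apply: eq_bigr => l _.
by rewrite mulr_sumr; apply: eq_bigr => m _; rewrite mulrA.
Qed.

Lemma opmul0r (A : op) : opmul op0 A = op0.
Proof. by apply: opP => i j; rewrite /opmul big1 // => l _; rewrite mul0r. Qed.

Lemma opmulr0 (A : op) : opmul A op0 = op0.
Proof. by apply: opP => i j; rewrite /opmul big1 // => l _; rewrite mulr0. Qed.

Lemma opmulDl (A B D : op) : opmul (opadd A B) D = opadd (opmul A D) (opmul B D).
Proof.
by apply: opP => i j; rewrite /opmul /opadd -big_split; apply: eq_bigr => l _; rewrite mulrDl.
Qed.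

Lemma opmulDr (A B D : op) : opmul A (opadd B D) = opadd (opmul A B) (opmul A D).
Proof.
by apply: opP => i j; rewrite /opmul /opadd -big_split; apply: eq_bigr => l _; rewrite mulrDr.
Qed.

Lemma opmulZl c (A B : op) : opmul (opscale c A) B = opscale c (opmul A B).
Proof.
by apply: opP => i j; rewrite /opmul /opscale mulr_sumr; apply: eq_bigr => l _; rewrite mulrA.
Qed.

Lemma opmulZr c (A B : op) : opmul A (opscale c B) = opscale c (opmul A B).
Proof.
by apply: opP => i j; rewrite /opmul /opscale mulr_sumr; apply: eq_bigr => l _; rewrite mulrCA.
Qed.

Lemma opscaleK c : c != 0 -> cancel (@opscale R N n c) (opscale c^-1).
Proof. by move=> c0 A; apply: opP => i j; rewrite /opscale mulKf. Qed.

Lemma adjK : involutive (@adj R N n).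
Proof. by move=> A; apply: opP => i j; rewrite /adj conjcK. Qed.

Lemma adjM (A B : op) : adj (opmul A B) = opmul (adj B) (adj A).
Proof.
apply: opP => i j; rewrite /adj /opmul rmorph_sum; apply: eq_bigr => l _.
by rewrite rmorphM mulrC.
Qed.

Lemma adj_ketbra (x y : vec) : adj (ketbra x y) = ketbra y x.
Proof. by apply: opP => i j; rewrite /adj /ketbra rmorphM /= conjcK mulrC. Qed.

Definition dotv (y z : vec) : C := \sum_l (y l)^*%C * z l.

Lemma ketbra_mul (x y y' z : vec) :
  opmul (ketbra x y) (ketbra y' z) = opscale (dotv y y') (ketbra x z).
Proof.
apply: opP => i j; rewrite /opmul /opscale /ketbra /dotv mulr_suml.
by apply: eq_bigr => l _; ring.
Qed.

Lemma ketbra_through (x y z : vec) :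
  dotv y y = 1 -> ketbra x z = opmul (ketbra x y) (ketbra y z).
Proof.
by move=> y1; rewrite ketbra_mul y1; apply: opP => i j; rewrite /opscale mul1r.
Qed.

Lemma dotv_basis (i : Idx N n) : dotv (Defs.basis R i) (Defs.basis R i) = 1.
Proof.
rewrite /dotv (bigD1 i) //= big1 => [|l /negbTE li]; last by rewrite /Defs.basis li mulr0.
by rewrite /Defs.basis eqxx conjc1 mulr1 addr0.
Qed.

End OperatorAlgebra.

Section Commutation.
Variables (R : realType) (N : nat) (n : nat -> nat).
Local Notation op := (op R N n).
Variable p : op.

Definition commutes (A : op) := opmul A p = opmul p A.

Lemma commutes0 : commutes (@op0 R N n).
Proof. by rewrite /commutes opmul0r opmulr0. Qed.

Lemma commutesD A B : commutes A -> commutes B -> commutes (opadd A B).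
Proof. by rewrite /commutes opmulDl opmulDr => -> ->. Qed.

Lemma commutesZ c A : commutes A -> commutes (opscale c A).
Proof. by rewrite /commutes opmulZl opmulZr => ->. Qed.

Lemma commutesB A B : commutes A -> commutes B -> commutes (opsub A B).
Proof.
have -> : opsub A B = opadd A (opscale (-1) B).
  by apply: opP => i j; rewrite /opsub /opadd /opscale mulN1r.
by move=> cA cB; apply: commutesD => //; apply: commutesZ.
Qed.

Lemma commutesM A B : commutes A -> commutes B -> commutes (opmul A B).
Proof. by rewrite /commutes => cA cB; rewrite opmulA cB -opmulA cA opmulA. Qed.

Lemma commutes_sum F : (forall k, commutes (F k)) -> commutes (opsum F).
Proof.
move=> cF; apply: opP => i j; rewrite /opmul /opsum.
under eq_bigr do rewrite mulr_suml; under [RHS]eq_bigr do rewrite mulr_sumr.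
rewrite exchange_big [RHS]exchange_big; apply: eq_bigr => k _.
by have := congr1 (fun f => f i j) (cF k).
Qed.

Lemma commutes_ketbra_through (x y z : vec R N n) : dotv y y = 1 ->
  commutes (ketbra x y) -> commutes (ketbra y z) -> commutes (ketbra x z).
Proof. by move=> y1 cxy cyz; rewrite (ketbra_through x z y1); apply: commutesM. Qed.

Lemma commutes_unscale c A : c != 0 -> commutes (opscale c A) -> commutes A.
Proof. by move=> c0 /(commutesZ c^-1); rewrite opscaleK. Qed.

Hypothesis p_sa : selfadjoint p.

Lemma commutes_adj A : commutes A -> commutes (adj A).
Proof. by rewrite /commutes => /(congr1 (@adj R N n)); rewrite !adjM p_sa => ->. Qed.

Lemma commutes_ketbraC (x y : vec R N n) : commutes (ketbra x y) -> commutes (ketbra y x).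
Proof. by move=> /commutes_adj; rewrite adj_ketbra. Qed.

Lemma commutes_of_invariant A :
  opmul A p = opmul p (opmul A p) -> opmul (adj A) p = opmul p (opmul (adj A) p) ->
  commutes A.
Proof.
move=> inv_A /(congr1 (@adj R N n)); rewrite !adjM adjK p_sa => inv_adjA.
by rewrite /commutes inv_A -opmulA -inv_adjA.
Qed.

End Commutation.

Section RootsOfUnity.
Variables (F : fieldType) (m : nat) (z : F).
Hypothesis prim_z : m.-primitive_root z.

Lemma sum_unity_root_eq0 (x : F) : x ^+ m = 1 -> x != 1 -> \sum_(a < m) x ^+ a = 0.
Proof.
move=> xm x1; apply/eqP; move: (subrX1 x m); rewrite xm subrr => /eqP.
by rewrite eq_sym mulf_eq0 subr_eq0 (negbTE x1).
Qed.

Lemma prim_root_orthogonality b b' : (b < m)%N -> (b' < m)%N ->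
  \sum_(a < m) (z ^+ b / z ^+ b') ^+ a = if b == b' then m%:R else 0.
Proof.
move=> bm b'm; have z0 : z ^+ b' != 0.
  by rewrite expf_neq0 // (prim_root_eq0 prim_z) -lt0n (prim_order_gt0 prim_z).
case: eqP => [->|/eqP neq_bb'].
  rewrite divff //; under eq_bigr => a _ do rewrite expr1n.
  by rewrite sumr_const card_ord.
apply: sum_unity_root_eq0.
  by rewrite exprMn exprVn -!exprM mulnC exprM (prim_expr_order prim_z) expr1n
             mulnC exprM (prim_expr_order prim_z) expr1n invr1 mulr1.
rewrite (can2_eq (divfK z0) (mulfK z0)) mul1r (eq_prim_root_expr prim_z).
by rewrite !modn_small.
Qed.

End RootsOfUnity.

Section ComplexScalars.
Variable R : realType.
Local Notation C := R[i].

Lemma rCM (a b : R) : rC a * rC b = rC (a * b).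
Proof. by rewrite /rC !complexr0 rmorphM. Qed.

Lemma conj_rC (a : R) : (rC a)^*%C = rC a.
Proof. by rewrite /rC /= oppr0. Qed.

Lemma rC_eq0 (a : R) : (rC a == 0) = (a == 0).
Proof. by rewrite /rC complexr0 -(rmorph0 (real_complex R)) (inj_eq (@complexI R)). Qed.

Lemma rC_sqrt_neq0 (a : R) : 0 < a -> rC (Num.sqrt a) != 0.
Proof. by move=> a_gt0; rewrite rC_eq0 sqrtr_eq0 -ltNge. Qed.

(* Rewriting with [rmorphM] or [rmorphXn] directly leaves conjugation as a
   morphism application, which lemmas stated with [^*] (such as [conj_isqrt],
   [zeta_conj]) no longer match. *)
Lemma conjcM (x y : C) : (x * y)^*%C = x^*%C * y^*%C.
Proof. exact: rmorphM. Qed.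

Lemma conjcX (x : C) j : (x ^+ j)^*%C = x^*%C ^+ j.
Proof. exact: rmorphXn. Qed.

Lemma conj_isqrt m : (isqrt R m)^*%C = isqrt R m.
Proof. exact: conj_rC. Qed.

Lemma isqrtK m : (0 < m)%N -> isqrt R m * isqrt R m * m%:R = 1.
Proof.
move=> m_gt0; have -> : (m%:R : C) = rC m%:R by rewrite /rC complexr0 rmorph_nat.
have sqrt_gt0 : 0 < Num.sqrt (m%:R : R) by rewrite sqrtr_gt0 ltr0n.
rewrite /isqrt !rCM -invrM ?unitfE ?gt_eqF // -expr2 sqr_sqrtr ?ler0n //.
by rewrite mulVf // pnatr_eq0 -lt0n.
Qed.

Lemma zetaX m j :
  zeta R m ^+ j = (cos (j%:R * (2 * pi / m%:R)) +i* sin (j%:R * (2 * pi / m%:R)))%C.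
Proof.
elim: j => [|j IHj]; first by rewrite expr0 mul0r cos0 sin0.
rewrite exprS IHj /zeta; set t := 2 * pi / m%:R.
rewrite -[j.+1]addn1 natrD mulrDl mul1r addrC cosD sinD.
by apply/eqP; rewrite eq_complex /=; apply/andP; split; apply/eqP; ring.
Qed.

Lemma zetaX_neq1 m d : (0 < d)%N -> (d < m)%N -> zeta R m ^+ d != 1.
Proof.
move=> d_gt0 dm; rewrite zetaX; apply/negP => /eqP [] cos1 _.
set x := d%:R * (2 * pi / m%:R) in cos1.
have m_gt0 : 0 < (m%:R : R) by rewrite ltr0n (leq_ltn_trans _ dm).
have half_x : x / 2 = pi * (d%:R / m%:R) by rewrite /x; field; rewrite gt_eqF.
have : 0 < x / 2 < pi.
  rewrite half_x pmulr_rgt0 ?pi_gt0 ?divr_gt0 ?m_gt0 ?ltr0n //=.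
  by rewrite gtr_pMr ?pi_gt0 // ltr_pdivrMr // mul1r ltr_nat.
move/sin_gt0_pi; have x2 : x = (x / 2) *+ 2 by rewrite -mulr_natr mulfVK ?pnatr_eq0.
rewrite x2 cos_mulr2n cos2sin2 in cos1.
have : sin (x / 2) ^+ 2 = 0 by lra.
by move/eqP; rewrite sqrf_eq0 => /eqP ->; rewrite ltxx.
Qed.

Lemma zeta_prim_root m : (0 < m)%N -> m.-primitive_root (zeta R m).
Proof.
move=> m_gt0; apply/andP; split => //; apply/forallP => i; rewrite unity_rootE.
case: (i.+1 =P m) => [->|/eqP im].
  rewrite eqb_id; apply/eqP; rewrite zetaX mulrC mulfVK ?pnatr_eq0 -?lt0n //.
  by rewrite mulrC mulr_natr cos2pi sin2pi.
by rewrite eqbF_neg zetaX_neq1 // ltn_neqAle im ltn_ord.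
Qed.

Lemma zeta_conj m : (zeta R m)^*%C = (zeta R m)^-1.
Proof.
have zeta_norm : (zeta R m)^*%C * zeta R m = 1.
  rewrite /zeta; set t := 2 * pi / m%:R.
  apply/eqP; rewrite eq_complex /=; apply/andP; split; apply/eqP.
    by rewrite -(cos2Dsin2 t); ring.
  by ring.
have zeta_neq0 : zeta R m != 0.
  by apply/eqP => z0; move: zeta_norm; rewrite z0 mulr0 => /eqP; rewrite eq_sym oner_eq0.
by apply: (mulIf zeta_neq0); rewrite zeta_norm mulVf.
Qed.

Lemma zeta_orthogonality m b b' : (b < m)%N -> (b' < m)%N ->
  \sum_(a < m) zeta R m ^+ (b * a) * (zeta R m ^+ (b' * a))^*%C
  = if b == b' then m%:R else 0.
Proof.
move=> bm b'm; rewrite -(prim_root_orthogonality (zeta_prim_root (leq_ltn_trans _ bm))) //.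
by apply: eq_bigr => a _; rewrite conjcX zeta_conj !exprM exprMn exprVn -exprVn.
Qed.

End ComplexScalars.

Section Blocks.
Variables (R : realType) (N : nat) (n : nat -> nat).
Local Notation C := R[i].
Local Notation Idx := (Idx N n).
Local Notation phi := (@phi R N n).
Local Notation Z := (@Z R N n).
Local Notation Pblock := (@Pblock R N n).

Definition blk (k : 'I_N) (a : 'I_(n k)) : Idx := inr (Tagged (fun k : 'I_N => 'I_(n k)) a).

Definition in_block (k : nat) (i : Idx) : bool :=
  if i is inr (existT k' _) then val k' == k else false.

Lemma sum_block (k : 'I_N) (F : Idx -> C) :
  (forall l, ~~ in_block k l -> F l = 0) -> \sum_l F l = \sum_(a : 'I_(n k)) F (blk a).
Proof.
move=> F0; rewrite big_sumType /= big1 ?add0r => [|b _]; last exact: F0.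
have -> : \sum_(p : {k : 'I_N & 'I_(n k)}) F (inr p)
          = \sum_(k' : 'I_N) \sum_(a : 'I_(n k')) F (blk a).
  rewrite (sig_big_dep xpredT (fun _ => xpredT) (fun k' a => F (@blk k' a))).
  by apply: eq_bigr => -[].
rewrite (bigD1 k) //= [X in _ + X]big1 ?addr0 // => k' k'k; apply: big1 => a _; apply: F0.
by rewrite /= (inj_eq val_inj).
Qed.

Lemma blk_inj (k : 'I_N) : injective (@blk k).
Proof. by move=> a b [] /eqP; rewrite eq_Tagged => /eqP. Qed.

Lemma dotv_phi k (kN : (k < N)%N) : (0 < n k)%N -> dotv (phi k 0) (phi k 0) = 1.
Proof.
move=> nk_gt0; rewrite /dotv (@sum_block (Ordinal kN)) => [|[b|[k' a]] /= kk']; last 2 first.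
- by rewrite mulr0.
- by rewrite (negbTE kk') mulr0.
under eq_bigr do rewrite /= eqxx muln0 expr0 invr1 mulr1 conj_isqrt.
by rewrite sumr_const card_ord -(mulr_natr _ (n k)) isqrtK.
Qed.

Lemma Z_row0 k i l : ~~ in_block k.+1 i -> Z k i l = 0.
Proof. by case: i => [//|[k1 b]] /= ik; case: l => [//|[k0 a]]; rewrite /Z (negbTE ik). Qed.

Lemma Z_col0 k i l : ~~ in_block k l -> Z k i l = 0.
Proof.
case: l => [|[k0 a]] /= lk; first by case: i => [|[]].
by case: i => [//|[k1 b]]; rewrite /Z (negbTE lk) andbF.
Qed.

Lemma Pblock_row0 k i j : ~~ in_block k i -> Pblock k i j = 0.
Proof. by rewrite /Pblock; case: eqP => // _; case: i => [//|[k1 b]] /= /negbTE ->. Qed.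

Lemma Z_mul_adj k (kN : (k.+1 < N)%N) : (n k.+1 <= n k)%N -> (0 < n k)%N ->
  opmul (Z k) (adj (Z k)) = Pblock k.+1.
Proof.
move=> n_mono nk_gt0; apply: opP => i j; rewrite /opmul /adj.
have [ik|ik] := boolP (in_block k.+1 i); last first.
  by rewrite Pblock_row0 // big1 // => l _; rewrite (Z_row0 _ ik) mul0r.
have [jk|jk] := boolP (in_block k.+1 j); last first.
  rewrite big1 => [|l _]; last by rewrite (Z_row0 _ jk) conjc0 mulr0.
  by rewrite /Pblock; case: eqP => // ij; rewrite ij (negbTE jk) in ik.
case: i ik => [//|[k1 b]] /eqP k1k; case: j jk => [//|[k2 b']] /eqP k2k.
have k21 : k2 = k1 by apply: val_inj; rewrite /= k1k k2k.
subst k2; rewrite (@sum_block (Ordinal (ltnW kN))) => [|l lk]; last by rewrite Z_col0 // mul0r.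
have ltn_nk (c : 'I_(n k1)) : (c < n k)%N by rewrite (leq_trans (ltn_ord c)) // k1k.
rewrite /= (introT eqP k1k) !eqxx /=.
under eq_bigr do rewrite conjcM conj_isqrt mulrACA.
rewrite -mulr_sumr zeta_orthogonality ?ltn_nk //.
rewrite /Pblock -/(blk b) -/(blk b') (inj_eq (@blk_inj _)) /= (introT eqP k1k).
by rewrite val_eqE; case: eqP => _; rewrite ?mulr0 ?isqrtK.
Qed.

End Blocks.

Section Generator.
Variables (R : realType) (N : nat) (n : nat -> nat) (Gam gam : bool -> Omega N -> R).
Local Notation op := (op R N n).
Local Notation op0 := (@op0 R N n).
Local Notation Kraus := (@Kraus R N n Gam).
Local Notation Heff := (@Heff R N n gam).
Local Notation Lstar := (@Lstar R N n Gam gam).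

Lemma Lstar_eq0 (x : op) : selfadjoint x ->
  (forall eps w, commutes x (Kraus eps w)) -> commutes x Heff -> Lstar x = op0.
Proof.
move=> x_sa cK cH; apply: opP => i j; rewrite /Lstar /op0 cH subrr mulr0 add0r.
rewrite big1 // => w _; rewrite big1 // => eps _ /=.
have cLL : commutes x (opmul (adj (Kraus eps w)) (Kraus eps w)).
  by apply: commutesM => //; apply: commutes_adj.
by rewrite opmulA -cK -opmulA -cLL; field.
Qed.

Lemma Lstar0 : Lstar op0 = op0.
Proof.
have c0 A : commutes op0 A by rewrite /commutes opmul0r opmulr0.
by apply: Lstar_eq0 => //; apply: opP => i j; rewrite /adj conjc0.
Qed.

Lemma Tstar_is_stationary t (x : op) : Lstar x = op0 -> Tstar_is Gam gam t x x.
Proof.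
move=> Lx0 i j.
have iterLx0 k : iter k.+1 Lstar x = op0 by elim: k => [//|k IHk]; rewrite iterS IHk Lstar0.
have partial_x M : (0 < M)%N -> expL_partial Gam gam t x M i j = x i j.
  case: M => // M _; rewrite /expL_partial big_ord_recl big1 => [|k _]; last first.
    by rewrite /= -iterS iterLx0 /op0 mulr0.
  by rewrite /= expr0 fact0 divr1 addr0 (_ : rC 1 = 1) ?mul1r.
by split; apply: cvg_near_cst; exists 1%N => // M /= M_gt0; rewrite partial_x.
Qed.

Lemma harmonic_of_commutes (x : op) : selfadjoint x ->
  (forall eps w, commutes x (Kraus eps w)) -> commutes x Heff -> is_harmonic Gam gam x.
Proof.
move=> x_sa cK cH; split => // t _.
exact/Tstar_is_stationary/Lstar_eq0.
Qed.

End Generator.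

Section CommutingObservable.
Variables (R : realType) (N : nat) (n : nat -> nat) (Gam gam : bool -> Omega N -> R).
Variable p : op R N n.
Local Notation Kraus := (@Kraus R N n Gam).
Local Notation phi01 := (@phi01 R N n).
Local Notation phi0N := (@phi0N R N n).
Local Notation ket_plus := (@ket_plus R N n).
Local Notation ket_minus := (@ket_minus R N n).

Hypothesis N_ge2 : (2 <= N)%N.
Hypothesis n_mono : forall i j : nat, (i <= j)%N -> (j < N)%N -> (n j <= n i)%N.
Hypothesis nN_gt0 : (1 <= n N.-1)%N.
Hypothesis Gam_gt0 : forall (eps : bool) (w : Omega N), 0 < Gam eps w.
Hypothesis p_sa : selfadjoint p.
Hypothesis p_Kraus_invariant : forall w : Omega N,
  opmul (Kraus false w) p = opmul p (opmul (Kraus false w) p) /\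
  opmul (adj (Kraus false w)) p = opmul p (opmul (adj (Kraus false w)) p).

Lemma n_gt0 k : (k < N)%N -> (0 < n k)%N.
Proof.
move=> kN; apply: (leq_trans nN_gt0); apply: n_mono; last by rewrite ltn_predL (leq_ltn_trans _ kN).
by rewrite -ltnS prednK // (leq_ltn_trans _ kN).
Qed.

Lemma commutes_Kraus_minus w : commutes p (Kraus false w).
Proof. by case: (p_Kraus_invariant w); apply: commutes_of_invariant. Qed.

Lemma commutes_ketbra_phi01_plus : commutes p (ketbra phi01 ket_plus).
Proof.
apply: (commutes_unscale _ (commutes_Kraus_minus (inl true))).
by rewrite rC_sqrt_neq0 // mulr_gt0 ?ltr0n ?n_gt0 // (leq_trans _ N_ge2).
Qed.

Lemma commutes_ketbra_minus_phi0N : commutes p (ketbra ket_minus phi0N).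
Proof. exact: (commutes_unscale (rC_sqrt_neq0 _) (commutes_Kraus_minus (inl false))). Qed.

Lemma commutes_Z (k : 'I_N.-1) : commutes p (Z R k).
Proof. exact: (commutes_unscale (rC_sqrt_neq0 _) (commutes_Kraus_minus (inr k))). Qed.

Lemma commutes_Kraus eps w : commutes p (Kraus eps w).
Proof.
case: eps; last exact: commutes_Kraus_minus.
case: w => [[]|k] /=; last exact/commutesZ/commutes_adj/commutes_Z.
  exact/commutesZ/commutes_ketbraC/commutes_ketbra_phi01_plus.
exact: commutes0.
Qed.

Lemma commutes_Heff : commutes p (Heff gam).
Proof.
have dotv01 : dotv phi01 phi01 = 1 by apply: dotv_phi; rewrite ?n_gt0 // (leq_trans _ N_ge2).
have dotv0N : dotv phi0N phi0N = 1 by apply: dotv_phi; rewrite ?n_gt0 // ltn_predL (ltnW N_ge2).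
have dotv_plus : dotv ket_plus ket_plus = 1 by apply: dotv_basis.
have dotv_minus : dotv ket_minus ket_minus = 1 by apply: dotv_basis.
have c01 := commutes_ketbra_phi01_plus; have c0N := commutes_ketbra_minus_phi0N.
rewrite /Heff; apply: commutesD; [|apply: commutesD; [|apply: commutesD; [|apply: commutesD]]].
- exact/commutesZ/(commutes_ketbra_through dotv01)/c01/commutes_ketbraC.
- exact/commutesZ/(commutes_ketbra_through dotv_plus)/commutes_ketbraC.
- exact/commutesZ/(commutes_ketbra_through dotv_minus)/c0N/commutes_ketbraC.
- exact/commutesZ/(commutes_ketbra_through dotv0N)/commutes_ketbraC.
apply: commutes_sum => k; apply: commutesB; apply: commutesZ.
  by apply: commutesM; [apply: (commutes_adj p_sa)|]; apply: commutes_Z.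
have kN : ((val k).+1 < N)%N by rewrite -ltn_predRL ltn_ord.
rewrite -Z_mul_adj ?n_mono ?n_gt0 ?(ltnW kN) //.
by apply: commutesM; [|apply: (commutes_adj p_sa)]; apply: commutes_Z.
Qed.

End CommutingObservable.

Theorem lemma3p2 (R : realType) (N : nat) (n : nat -> nat)
  (Gam gam : bool -> Omega N -> R) (p : op R N n) :
  (2 <= N)%N ->
  (forall i j : nat, (i <= j)%N -> (j < N)%N -> (n j <= n i)%N) ->
  (1 <= n N.-1)%N ->
  (forall (eps : bool) (w : Omega N), 0 < Gam eps w) ->
  selfadjoint p ->
  (forall w : Omega N,
     opmul (@Kraus R N n Gam false w) p = opmul p (opmul (@Kraus R N n Gam false w) p) /\
     opmul (adj (@Kraus R N n Gam false w)) p
       = opmul p (opmul (adj (@Kraus R N n Gam false w)) p)) ->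
  @is_harmonic R N n Gam gam p.
Proof.
move=> N_ge2 n_mono nN_gt0 Gam_gt0 p_sa p_Kraus_invariant.
apply: harmonic_of_commutes => //.
  exact: commutes_Kraus.
exact: commutes_Heff.
Qed.
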